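(* Let $\mathbf{X}$ be a computable metric space. Then the map $(U_n)_{n\in\mathbb{N}}\mapsto\bigcup_{n\in\mathbb{N}}(X\setminus U_n):\mathcal{C}(\mathbb{N},\mathcal{O}(\mathbf{X}))\to\mathcal{O}'(\mathbf{X})$ admits a computable multi-valued inverse; i.e. there is a computable procedure that, given any $U\in\mathcal{O}'(\mathbf{X})$, produces a sequence $(U_n)_{n\in\mathbb{N}}$ of open sets with $U=\bigcup_{n}(X\setminus U_n)$.
   Context: Represented spaces $(X,\delta_X)$ with $\delta_X:\subseteq\mathbb{N}^\mathbb{N}\to X$ partial surjective; computable maps via computable realizers; $\mathcal{C}(\mathbf{X},\mathbf{Y})$ the represented space of continuous maps; $\mathbb{N}$ represented by $\delta_\mathbb{N}(0^n10^\mathbb{N})=n$. A computable metric space carries its Cauchy representation. $\mathbb{S}=(\{\bot,\top\},\delta_\mathbb{S})$, $\delta_\mathbb{S}(0^\mathbb{N})=\bot$, $\delta_\mathbb{S}(p)=\top$ otherwise; $\mathcal{O}(\mathbf{X})=\mathcal{C}(\mathbf{X},\mathbb{S})$ (open sets, identified with subsets). $\lim(p)(n)=\lim_{i\to\infty}p(\langle n,i\rangle)$; $\mathbb{S}'=(\{\bot,\top\},\delta_\mathbb{S}\circ\lim)$; $\mathcal{O}'(\mathbf{X})=\mathcal{C}(\mathbf{X},\mathbb{S}')$, identified with subsets of $X$. *)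

From Stdlib Require Import Reals List Arith Lia.
Import ListNotations.
Open Scope R_scope.

Inductive PR : Type :=
| PZero : PR
| PSucc : PR
| PProj : nat -> PR
| PComp : PR -> list PR -> PR
| PRec  : PR -> PR -> PR
| PMu   : PR -> PR.

Inductive eval : PR -> list nat -> nat -> Prop :=
| ev_zero v : eval PZero v 0
| ev_succ x v : eval PSucc (x :: v) (S x)
| ev_proj i v : (i < length v)%nat -> eval (PProj i) v (nth i v 0%nat)
| ev_comp f gs v ws y : evals gs v ws -> eval f ws y -> eval (PComp f gs) v y
| ev_rec0 f g v y : eval f v y -> eval (PRec f g) (0%nat :: v) y
| ev_recS f g n v y z : eval (PRec f g) (n :: v) y -> eval g (n :: y :: v) z ->
    eval (PRec f g) (S n :: v) z
| ev_mu f v n : eval f (n :: v) 0%nat ->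
    (forall m, (m < n)%nat -> exists k, eval f (m :: v) (S k)) -> eval (PMu f) v n
with evals : list PR -> list nat -> list nat -> Prop :=
| evs_nil v : evals [] v []
| evs_cons g gs v w ws : eval g v w -> evals gs v ws -> evals (g :: gs) v (w :: ws).

Definition computable_nat (h : nat -> nat) : Prop :=
  exists c : PR, forall n, eval c [n] (h n).

Definition baire := nat -> nat.

Definition cpair (x y : nat) : nat := ((x + y) * (x + y + 1)) / 2 + y.

Definition code_list (l : list nat) : nat :=
  fold_right (fun x c => S (cpair x c)) 0%nat l.

Definition pref (p : baire) (m : nat) : list nat := map p (seq 0 m).

(** [runs a p q]: the oracle machine given by the associate [a] (answer 0 =
    "read more input", answer k+1 = "write k") on input p produces the
    infinite output q. *)
Definition runs (a : baire) (p q : baire) : Prop :=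
  forall n, exists m,
    a (cpair n (code_list (pref p m))) <> 0%nat /\
    (forall m', (m' < m)%nat -> a (cpair n (code_list (pref p m'))) = 0%nat) /\
    q n = pred (a (cpair n (code_list (pref p m)))).

Record rep_space := RepSpace {
  carrier :> Type;
  delta : baire -> carrier -> Prop
}.

Definition realizes (X Y : rep_space) (a : baire) (f : X -> Y) : Prop :=
  forall p x, delta X p x -> exists q, runs a p q /\ delta Y q (f x).

Definition computable_mv (X Y : rep_space) (R : X -> Y -> Prop) : Prop :=
  exists a : baire, computable_nat a /\
    forall p x, delta X p x ->
      exists q, runs a p q /\ exists y, delta Y q y /\ R x y.

Definition rep_nat : rep_space :=
  RepSpace nat (fun p n => forall k, p k = (if Nat.eqb k n then 1%nat else 0%nat)).

(** Sierpinski space S = {bot, top}; we model bot as False and top as True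
    (points are Props, top = the true ones): delta_S(0^omega) = bot, else top. *)
Definition delta_S (p : baire) (P : Prop) : Prop :=
  (P <-> exists n, p n <> 0%nat).
Definition rep_S : rep_space := RepSpace Prop delta_S.

Definition lim_rel (p r : baire) : Prop :=
  forall n, exists i0, forall i, (i0 <= i)%nat -> p (cpair n i) = r n.

Definition rep_S' : rep_space :=
  RepSpace Prop (fun p P => exists r, lim_rel p r /\ delta_S r P).

Definition rep_C (X Y : rep_space) : rep_space :=
  RepSpace (X -> Y) (fun a f => realizes X Y a f).

Definition rep_O (X : rep_space) : rep_space := rep_C X rep_S.
Definition rep_O' (X : rep_space) : rep_space := rep_C X rep_S'.

Record cmetric_space := CMetric {
  cm_X :> Type;
  cm_d : cm_X -> cm_X -> R;
  cm_d_nonneg : forall x y, 0 <= cm_d x y;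
  cm_d_eq0 : forall x y, cm_d x y = 0 <-> x = y;
  cm_d_sym : forall x y, cm_d x y = cm_d y x;
  cm_d_tri : forall x y z, cm_d x z <= cm_d x y + cm_d y z;
  cm_seq : nat -> cm_X;
  cm_dense : forall x eps, 0 < eps -> exists i, cm_d x (cm_seq i) < eps;
  cm_dist_computable : exists num neg den : nat -> nat,
      computable_nat num /\ computable_nat neg /\ computable_nat den /\
      forall i j k,
        Rabs ((INR (num (cpair (cpair i j) k)) - INR (neg (cpair (cpair i j) k)))
                / INR (S (den (cpair (cpair i j) k)))
              - cm_d (cm_seq i) (cm_seq j)) <= / 2 ^ k
}.

Definition cauchy (M : cmetric_space) : rep_space :=
  RepSpace M (fun p x => forall i, cm_d M (cm_seq M (p i)) x <= / 2 ^ i).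

(* A name of [U ∈ O'(X)] is a realizer [b] whose outputs at the positions [⟨k, i⟩] converge
   as [i → ∞], and [x ∈ U] iff one of these limits is nonzero. For [n = ⟨k, i0, w, e⟩], the
   point [x] lies outside the open set [U_n] iff every centre [α (w_j)] is within
   [2^-j - 2^-e] of [x] and no longer approximation of [x] extending [w] makes [b] write [0] at
   a position [⟨k, i⟩] with [i >= i0]. Extending [w] to a full name of such an [x] then forces a
   nonzero limit at [k], so [x ∈ U]. Conversely, if [x ∈ U] lay in every [U_n], a diagonal
   construction would give a name of [x] on which, for every [k], [b] writes [0] at [⟨k, i⟩]
   for infinitely many [i]. Membership in [U_n] is witnessed by finite data, checked with the
   computable approximations of the metric, so a primitive recursive search, compiled to a
   partial recursive function, turns [b] into a name of [n ↦ U_n]. *)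

From Stdlib Require Import Reals List Arith Lia Lra Cantor Classical IndefiniteDescription.
Import ListNotations.

Open Scope nat_scope.

(** * Primitive recursive expressions *)

Inductive expr : Type :=
| EVar : nat -> expr
| ECst : nat -> expr
| ESucc : expr -> expr
| ERec : expr -> expr -> expr -> expr
| EExt : nat -> expr -> expr.

(* [ERec n z s] iterates [s] [n] times starting from [z]; inside [s], [EVar 0] is the
   counter and [EVar 1] the accumulator, the outer environment starting at [EVar 2].
   [EExt i] calls the [i]-th external function, e.g. a given computable function. *)
Fixpoint eval_expr (ext : nat -> nat -> nat) (e : expr) (env : list nat) : nat :=
  match e with
  | EVar i => nth i env 0
  | ECst k => k
  | ESucc e => S (eval_expr ext e env)
  | ERec n z s => nat_rect (fun _ => nat) (eval_expr ext z env)
                   (fun i acc => eval_expr ext s (i :: acc :: env)) (eval_expr ext n env)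
  | EExt i e => ext i (eval_expr ext e env)
  end.

Fixpoint const_code (k : nat) : PR :=
  match k with 0 => PZero | S k => PComp PSucc [const_code k] end.

Fixpoint compile (code : nat -> PR) (n : nat) (e : expr) : PR :=
  match e with
  | EVar i => if i <? n then PProj i else PZero
  | ECst k => const_code k
  | ESucc e => PComp PSucc [compile code n e]
  | ERec c z s => PComp (PRec (compile code n z) (compile code (S (S n)) s))
                    (compile code n c :: map PProj (seq 0 n))
  | EExt i e => PComp (code i) [compile code n e]
  end.

Lemma eval_const_code k v : eval (const_code k) v k.
Proof.
  induction k; simpl; [constructor|].
  econstructor; [constructor; [exact IHk | constructor] | constructor].
Qed.

Lemma skipn_nth_cons (v : list nat) s : s < length v -> skipn s v = nth s v 0 :: skipn (S s) v.
Proof. revert s; induction v as [|x v IH]; intros [|s] Hs; simpl in *; try lia; auto with arith. Qed.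

Lemma evals_projections v k s : s + k = length v ->
  evals (map PProj (seq s k)) v (skipn s v).
Proof.
  revert s; induction k as [|k IH]; intros s Hs; simpl.
  - rewrite skipn_all2 by lia. constructor.
  - rewrite (skipn_nth_cons v s) by lia.
    constructor; [constructor; lia | apply IH; lia].
Qed.

Lemma compile_correct ext code : (forall i m, eval (code i) [m] (ext i m)) ->
  forall e env, eval (compile code (length env) e) env (eval_expr ext e env).
Proof.
  intros Hcode e; induction e as [i|k|e IH|c IHc z IHz s IHs|i e IH]; intros env; simpl.
  - destruct (Nat.ltb_spec i (length env)).
    + constructor; lia.
    + rewrite nth_overflow by lia. constructor.
  - apply eval_const_code.
  - econstructor; [constructor; [apply IH | constructor] | constructor].
  - econstructor.
    + constructor; [apply IHc | apply (evals_projections env (length env) 0); lia].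
    + induction (eval_expr ext c env) as [|k IHk]; simpl.
      * constructor. apply IHz.
      * econstructor; [exact IHk | apply (IHs (k :: _ :: env))].
  - econstructor; [constructor; [apply IH | constructor] | apply Hcode].
Qed.

Lemma computable_nat_expr ext code e : (forall i m, eval (code i) [m] (ext i m)) ->
  computable_nat (fun n => eval_expr ext e [n]).
Proof. intros Hcode. exists (compile code 1 e). intros n. exact (compile_correct ext code Hcode e [n]). Qed.

Fixpoint shift (c k : nat) (e : expr) : expr :=
  match e with
  | EVar i => if i <? c then EVar i else EVar (i + k)
  | ECst n => ECst n
  | ESucc e => ESucc (shift c k e)
  | ERec n z s => ERec (shift c k n) (shift c k z) (shift (S (S c)) k s)
  | EExt i e => EExt i (shift c k e)
  end.

Section Combinators.
Variable ext : nat -> nat -> nat.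
Local Notation "⟦ e ⟧" := (eval_expr ext e).

Lemma eval_shift e pre ins env :
  ⟦shift (length pre) (length ins) e⟧ (pre ++ ins ++ env) = ⟦e⟧ (pre ++ env).
Proof.
  revert pre; induction e as [i|k|e IH|n IHn z IHz s IHs|i e IH]; intros pre; simpl.
  - destruct (Nat.ltb_spec i (length pre)); simpl.
    + rewrite !app_nth1 by lia. reflexivity.
    + rewrite !app_nth2 by lia. f_equal. lia.
  - reflexivity.
  - now rewrite IH.
  - rewrite IHn, IHz. induction (⟦n⟧ (pre ++ env)) as [|k IHk]; simpl; [reflexivity|].
    rewrite IHk. exact (IHs (k :: _ :: pre)).
  - now rewrite IH.
Qed.

Lemma eval_shift01 e a env : ⟦shift 0 1 e⟧ (a :: env) = ⟦e⟧ env.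
Proof. exact (eval_shift e [] [a] env). Qed.
Lemma eval_shift02 e a b env : ⟦shift 0 2 e⟧ (a :: b :: env) = ⟦e⟧ env.
Proof. exact (eval_shift e [] [a; b] env). Qed.
Lemma eval_shift11 e i a env : ⟦shift 1 1 e⟧ (i :: a :: env) = ⟦e⟧ (i :: env).
Proof. exact (eval_shift e [i] [a] env). Qed.

Definition e_pred x := ERec x (ECst 0) (EVar 0).
Definition e_add x y := ERec x y (ESucc (EVar 1)).

Lemma eval_pred x env : ⟦e_pred x⟧ env = pred (⟦x⟧ env).
Proof. simpl. now destruct (⟦x⟧ env). Qed.
Lemma eval_add x y env : ⟦e_add x y⟧ env = ⟦x⟧ env + ⟦y⟧ env.
Proof. simpl. induction (⟦x⟧ env); simpl; auto. Qed.

#[global] Opaque e_pred e_add.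

Definition e_sub x y := ERec y x (e_pred (EVar 1)).
Definition e_mul x y := ERec x (ECst 0) (e_add (EVar 1) (shift 0 2 y)).
Definition e_pow2 x := ERec x (ECst 1) (e_add (EVar 1) (EVar 1)).
Definition e_ifz c a b := ERec c a (shift 0 2 b).

Lemma eval_sub x y env : ⟦e_sub x y⟧ env = ⟦x⟧ env - ⟦y⟧ env.
Proof.
  simpl. induction (⟦y⟧ env) as [|n IH]; simpl; [lia|].
  rewrite eval_pred. simpl. rewrite IH. lia.
Qed.
Lemma eval_mul x y env : ⟦e_mul x y⟧ env = ⟦x⟧ env * ⟦y⟧ env.
Proof.
  simpl. induction (⟦x⟧ env) as [|n IH]; simpl; auto.
  rewrite eval_add. simpl. rewrite eval_shift02, IH. lia.
Qed.
Lemma eval_pow2 x env : ⟦e_pow2 x⟧ env = 2 ^ ⟦x⟧ env.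
Proof.
  simpl. induction (⟦x⟧ env) as [|n IH]; simpl; auto.
  rewrite eval_add. simpl. rewrite IH. lia.
Qed.
Lemma eval_ifz c a b env :
  ⟦e_ifz c a b⟧ env = match ⟦c⟧ env with 0 => ⟦a⟧ env | S _ => ⟦b⟧ env end.
Proof. simpl. destruct (⟦c⟧ env); simpl; auto. apply eval_shift02. Qed.

#[global] Opaque e_sub e_mul e_pow2 e_ifz.

Definition e_not a := e_ifz a (ECst 1) (ECst 0).
Definition e_and a b := e_ifz a (ECst 0) b.
Definition e_or a b := e_ifz a b (ECst 1).
Definition e_bool a := e_ifz a (ECst 0) (ECst 1).
Definition e_le x y := e_not (e_sub x y).
Definition e_lt x y := e_le (ESucc x) y.
Definition e_eq x y := e_and (e_le x y) (e_le y x).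
Definition e_guard c body := e_ifz c (ECst 0) (ESucc body).

Lemma eval_not a env : ⟦e_not a⟧ env <> 0 <-> ⟦a⟧ env = 0.
Proof. unfold e_not. rewrite eval_ifz. destruct (⟦a⟧ env); simpl; split; congruence. Qed.
Lemma eval_and a b env : ⟦e_and a b⟧ env <> 0 <-> ⟦a⟧ env <> 0 /\ ⟦b⟧ env <> 0.
Proof. unfold e_and. rewrite eval_ifz. destruct (⟦a⟧ env); simpl; intuition congruence. Qed.
Lemma eval_or a b env : ⟦e_or a b⟧ env <> 0 <-> ⟦a⟧ env <> 0 \/ ⟦b⟧ env <> 0.
Proof. unfold e_or. rewrite eval_ifz. destruct (⟦a⟧ env); simpl; intuition congruence. Qed.
Lemma eval_bool a env : ⟦e_bool a⟧ env = if ⟦a⟧ env =? 0 then 0 else 1.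
Proof. unfold e_bool. rewrite eval_ifz. now destruct (⟦a⟧ env). Qed.
Lemma eval_le x y env : ⟦e_le x y⟧ env <> 0 <-> ⟦x⟧ env <= ⟦y⟧ env.
Proof. unfold e_le. rewrite eval_not, eval_sub. lia. Qed.
Lemma eval_lt x y env : ⟦e_lt x y⟧ env <> 0 <-> ⟦x⟧ env < ⟦y⟧ env.
Proof. unfold e_lt. rewrite eval_le. simpl. lia. Qed.
Lemma eval_eq x y env : ⟦e_eq x y⟧ env <> 0 <-> ⟦x⟧ env = ⟦y⟧ env.
Proof. unfold e_eq. rewrite eval_and, !eval_le. lia. Qed.
Lemma eval_guard c body env :
  ⟦e_guard c body⟧ env = if ⟦c⟧ env =? 0 then 0 else S (⟦body⟧ env).
Proof. unfold e_guard. rewrite eval_ifz. now destruct (⟦c⟧ env). Qed.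
Lemma eval_guard_le x y body env :
  ⟦e_guard (e_le x y) body⟧ env = if ⟦x⟧ env <=? ⟦y⟧ env then S (⟦body⟧ env) else 0.
Proof.
  rewrite eval_guard. pose proof (eval_le x y env).
  destruct (⟦e_le x y⟧ env), (Nat.leb_spec (⟦x⟧ env) (⟦y⟧ env)); simpl; intuition (try lia; congruence).
Qed.

#[global] Opaque e_not e_and e_or e_bool e_le e_lt e_eq e_guard.

Fixpoint sum_below (n : nat) (f : nat -> nat) : nat :=
  match n with 0 => 0 | S k => sum_below k f + f k end.

Lemma sum_below_ext n f g : (forall i, i < n -> f i = g i) -> sum_below n f = sum_below n g.
Proof. induction n as [|n IH]; simpl; intros H; auto. rewrite IH, H; auto. Qed.

Lemma sum_below_indicator n s : sum_below n (fun t => if t <? s then 1 else 0) = Nat.min n s.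
Proof. induction n as [|n IH]; cbn [sum_below]; [reflexivity|]. rewrite IH. destruct (Nat.ltb_spec n s); lia. Qed.

Definition e_sum n P := ERec n (ECst 0) (e_add (EVar 1) (shift 1 1 P)).
Definition e_all n P := ERec n (ECst 1) (e_and (EVar 1) (shift 1 1 P)).
Definition e_ex n P := ERec n (ECst 0) (e_or (EVar 1) (shift 1 1 P)).

Lemma eval_sum n P env : ⟦e_sum n P⟧ env = sum_below (⟦n⟧ env) (fun i => ⟦P⟧ (i :: env)).
Proof.
  simpl. induction (⟦n⟧ env) as [|k IH]; simpl; auto.
  rewrite eval_add. simpl. now rewrite eval_shift11, IH.
Qed.
Lemma eval_all n P env :
  ⟦e_all n P⟧ env <> 0 <-> forall i, i < ⟦n⟧ env -> ⟦P⟧ (i :: env) <> 0.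
Proof.
  simpl. induction (⟦n⟧ env) as [|k IH]; simpl; [split; intros; lia|].
  rewrite eval_and. simpl. rewrite eval_shift11, IH. split.
  - intros [H1 H2] i Hi. destruct (Nat.eq_dec i k); subst; auto. apply H1; lia.
  - intros H. split; [intros; apply H|apply H]; lia.
Qed.
Lemma eval_ex n P env :
  ⟦e_ex n P⟧ env <> 0 <-> exists i, i < ⟦n⟧ env /\ ⟦P⟧ (i :: env) <> 0.
Proof.
  simpl. induction (⟦n⟧ env) as [|k IH]; simpl.
  - split; [congruence | intros (i & ? & ?); lia].
  - rewrite eval_or. simpl. rewrite eval_shift11, IH. split.
    + intros [(i & ? & ?)|H]; [exists i | exists k]; auto.
    + intros (i & Hi & H). destruct (Nat.eq_dec i k); subst; auto.
      left; exists i; split; auto; lia.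
Qed.

#[global] Opaque e_sum e_all e_ex.

End Combinators.

(** * Cantor pairing and coded lists *)

Fixpoint tri (n : nat) : nat := match n with 0 => 0 | S k => tri k + S k end.

Lemma cpair_tri x y : cpair x y = tri (x + y) + y.
Proof.
  assert (H2 : forall n, 2 * tri n = n * (n + 1)) by (induction n; simpl; lia).
  unfold cpair. f_equal. rewrite <- H2, Nat.mul_comm. apply Nat.div_mul. lia.
Qed.

Lemma cpair_to_nat x y : cpair x y = Cantor.to_nat (x, y).
Proof.
  rewrite cpair_tri. simpl. rewrite (Nat.add_comm y x).
  induction (x + y) as [|n IH]; simpl; lia.
Qed.

Lemma cpair_inj x y x' y' : cpair x y = cpair x' y' -> x = x' /\ y = y'.
Proof. rewrite !cpair_to_nat. intros H. apply to_nat_inj in H. now injection H. Qed.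

Lemma cpair_surj z : exists x y, z = cpair x y.
Proof.
  exists (fst (of_nat z)), (snd (of_nat z)).
  rewrite cpair_to_nat, <- surjective_pairing. symmetry. apply cancel_to_of.
Qed.

Lemma unpair_cpair x y : of_nat (cpair x y) = (x, y).
Proof. rewrite cpair_to_nat. apply cancel_of_to. Qed.

Lemma cpair_ge_sum x y : x + y <= cpair x y.
Proof. rewrite cpair_to_nat. pose proof (to_nat_non_decreasing x y). lia. Qed.
Lemma cpair_ge_l x y : x <= cpair x y.
Proof. pose proof (cpair_ge_sum x y). lia. Qed.
Lemma cpair_ge_r x y : y <= cpair x y.
Proof. pose proof (cpair_ge_sum x y). lia. Qed.

Lemma tri_le_mono a b : a <= b -> tri a <= tri b.
Proof. induction 1; simpl; lia. Qed.

Lemma tri_succ_le_cpair t x y : tri (S t) <= cpair x y <-> t < x + y.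
Proof.
  rewrite cpair_tri. split; intros H.
  - destruct (Nat.lt_ge_cases t (x + y)) as [|Hge]; auto.
    pose proof (tri_le_mono _ _ (le_n_S _ _ Hge)). simpl in *. lia.
  - pose proof (tri_le_mono _ _ H). lia.
Qed.

Lemma code_list_length l : length l <= code_list l.
Proof. induction l as [|x l IH]; simpl; [lia|]. pose proof (cpair_ge_r x (code_list l)). lia. Qed.

Lemma code_list_inj l l' : code_list l = code_list l' -> l = l'.
Proof.
  revert l'; induction l as [|x l IH]; intros [|x' l'] H; simpl in *; try congruence.
  injection H as H. apply cpair_inj in H as [-> H]. f_equal; auto.
Qed.

Lemma code_list_surj c : exists l, c = code_list l.
Proof.
  induction c as [c IH] using lt_wf_ind. destruct c as [|c]; [now exists []|].
  destruct (cpair_surj c) as (x & y & ->).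
  destruct (IH y) as [l ->]; [pose proof (cpair_ge_r x y); lia|].
  now exists (x :: l).
Qed.

Section PairingExpressions.
Variable ext : nat -> nat -> nat.
Local Notation "⟦ e ⟧" := (eval_expr ext e).

Definition e_tri x := ERec x (ECst 0) (e_add (EVar 1) (ESucc (EVar 0))).
Definition e_pair x y := e_add (e_tri (e_add x y)) y.

Lemma eval_tri x env : ⟦e_tri x⟧ env = tri (⟦x⟧ env).
Proof.
  simpl. induction (⟦x⟧ env) as [|n IH]; simpl; auto.
  rewrite eval_add. simpl. lia.
Qed.
Lemma eval_pair x y env : ⟦e_pair x y⟧ env = cpair (⟦x⟧ env) (⟦y⟧ env).
Proof. unfold e_pair. now rewrite eval_add, eval_tri, eval_add, cpair_tri. Qed.

#[global] Opaque e_tri e_pair.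

(* The diagonal [x + y] of [cpair x y] counts the [t] with [tri (t + 1) <= cpair x y]. *)
Definition e_diag z := e_sum z (e_bool (e_le (e_tri (ESucc (EVar 0))) (shift 0 1 z))).
Definition e_snd z := e_sub z (e_tri (e_diag z)).
Definition e_fst z := e_sub (e_diag z) (e_snd z).

Lemma eval_diag x y z env : ⟦z⟧ env = cpair x y -> ⟦e_diag z⟧ env = x + y.
Proof.
  intros Hz. unfold e_diag. rewrite eval_sum, Hz.
  rewrite (sum_below_ext _ _ (fun t => if t <? x + y then 1 else 0)).
  - rewrite sum_below_indicator. pose proof (cpair_ge_sum x y). lia.
  - intros t _. rewrite eval_bool. pose proof (eval_le ext (e_tri (ESucc (EVar 0))) (shift 0 1 z) (t :: env)).
    rewrite eval_tri, eval_shift01, Hz in H. cbn [eval_expr nth] in H. rewrite tri_succ_le_cpair in H.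
    destruct (⟦_⟧ (t :: env)), (Nat.ltb_spec t (x + y)); simpl; intuition (try lia; congruence).
Qed.

Lemma eval_snd x y z env : ⟦z⟧ env = cpair x y -> ⟦e_snd z⟧ env = y.
Proof. intros H. unfold e_snd. rewrite eval_sub, eval_tri, (eval_diag x y), H, cpair_tri by auto. lia. Qed.
Lemma eval_fst x y z env : ⟦z⟧ env = cpair x y -> ⟦e_fst z⟧ env = x.
Proof. intros H. unfold e_fst. rewrite eval_sub, (eval_snd x y), (eval_diag x y) by auto. lia. Qed.

#[global] Opaque e_diag e_fst e_snd.

Definition e_hd c := e_ifz c (ECst 0) (e_fst (e_pred c)).
Definition e_tl c := e_ifz c (ECst 0) (e_snd (e_pred c)).
Definition e_drop i c := ERec i c (e_tl (EVar 1)).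
Definition e_nth i c := e_hd (e_drop i c).
Definition e_len c := e_sum (ESucc c) (e_bool (e_drop (EVar 0) (shift 0 1 c))).
Definition e_firstn m c :=
  ERec m (ECst 0)
    (ESucc (e_pair (e_nth (e_sub (shift 0 2 m) (ESucc (EVar 0))) (shift 0 2 c)) (EVar 1))).

Lemma eval_tl l c env : ⟦c⟧ env = code_list l -> ⟦e_tl c⟧ env = code_list (tl l).
Proof.
  intros H. unfold e_tl. rewrite eval_ifz, H. destruct l as [|x l]; simpl; auto.
  apply (eval_snd x). now rewrite eval_pred, H.
Qed.
Lemma eval_hd l c env : ⟦c⟧ env = code_list l -> ⟦e_hd c⟧ env = hd 0 l.
Proof.
  intros H. unfold e_hd. rewrite eval_ifz, H. destruct l as [|x l]; simpl; auto.
  apply (eval_fst _ (code_list l)). now rewrite eval_pred, H.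
Qed.
Lemma eval_drop l i c env : ⟦c⟧ env = code_list l -> ⟦e_drop i c⟧ env = code_list (skipn (⟦i⟧ env) l).
Proof.
  intros H. simpl. induction (⟦i⟧ env) as [|n IH]; simpl; auto.
  rewrite (eval_tl (skipn n l)) by exact IH. f_equal.
  clear. revert l; induction n as [|n IH]; intros [|x l]; simpl; auto.
Qed.
Lemma eval_nth l i c env : ⟦c⟧ env = code_list l -> ⟦e_nth i c⟧ env = nth (⟦i⟧ env) l 0.
Proof.
  intros H. unfold e_nth. rewrite (eval_hd (skipn (⟦i⟧ env) l)) by (apply eval_drop; auto).
  generalize (⟦i⟧ env). clear. induction l; intros [|n]; simpl; auto.
Qed.

#[global] Opaque e_hd e_tl e_drop e_nth.

Lemma eval_len l c env : ⟦c⟧ env = code_list l -> ⟦e_len c⟧ env = length l.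
Proof.
  intros H. unfold e_len. rewrite eval_sum.
  rewrite (sum_below_ext _ _ (fun t => if t <? length l then 1 else 0)).
  - rewrite sum_below_indicator. cbn [eval_expr]. rewrite H. pose proof (code_list_length l). lia.
  - intros i _. rewrite eval_bool, (eval_drop l) by (now rewrite eval_shift01). simpl.
    destruct (Nat.ltb_spec i (length l)).
    + rewrite (skipn_nth_cons l i) by auto. reflexivity.
    + now rewrite skipn_all2.
Qed.

Lemma eval_firstn l m c env : ⟦c⟧ env = code_list l -> ⟦m⟧ env <= length l ->
  ⟦e_firstn m c⟧ env = code_list (firstn (⟦m⟧ env) l).
Proof.
  intros H Hm. unfold e_firstn. cbn [eval_expr]. set (M := ⟦m⟧ env) in *.
  match goal with |- nat_rect _ _ ?f _ = _ =>
    enough (Hr : forall r, r <= M -> nat_rect (fun _ => nat) 0 f r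
                                    = code_list (skipn (M - r) (firstn M l))) end.
  { rewrite Hr, Nat.sub_diag by lia. reflexivity. }
  induction r as [|r IH]; intros Hr; simpl.
  - rewrite Nat.sub_0_r, skipn_all2; [reflexivity|]. rewrite length_firstn. lia.
  - rewrite IH by lia. rewrite eval_pair, (eval_nth l) by (now rewrite eval_shift02).
    rewrite eval_sub, eval_shift02. simpl. fold M.
    rewrite (skipn_nth_cons (firstn M l) (M - S r)) by (rewrite length_firstn; lia).
    rewrite nth_firstn. destruct (Nat.ltb_spec (M - S r) M); [|lia].
    replace (S (M - S r)) with (M - r) by lia. reflexivity.
Qed.

#[global] Opaque e_len e_firstn.

End PairingExpressions.

(** * Certificates and the realizing program *)

Lemma pow2_pos j : (0 < 2 ^ j)%R.
Proof. apply pow_lt. lra. Qed.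

Lemma INR_pow2 j : INR (2 ^ j) = (2 ^ j)%R.
Proof. now rewrite pow_INR. Qed.

Lemma lt_iff_scaled a b c d K : (0 < K)%R -> (a - b = (c - d) / K)%R -> ((b < a)%R <-> (d < c)%R).
Proof.
  intros HK H. split; intros H1.
  - assert (H2 : (0 < (c - d) / K)%R) by lra.
    assert (H3 : (0 < (c - d) / K * K)%R) by (apply Rmult_lt_0_compat; lra).
    unfold Rdiv in H3. rewrite Rmult_assoc, Rinv_l, Rmult_1_r in H3; lra.
  - assert (0 < (c - d) / K)%R by (apply Rdiv_lt_0_compat; lra). lra.
Qed.

Section Certificates.
Variable ext : nat -> nat -> nat.
Local Notation "⟦ e ⟧" := (eval_expr ext e).

(* The approximation of [d(α a, α c)] to within [2^-l] provided by [cm_dist_computable],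
   when [ext 0], [ext 1], [ext 2] are its [num], [neg], [den]. *)
Definition dist_approx (a c l : nat) : R :=
  let X := cpair (cpair a c) l in (INR (ext 0 X) - INR (ext 1 X)) / INR (S (ext 2 X)).

(* If [d(α c, x) <= 2^-l], then [far_cert a c j l e] guarantees [d(α a, x) > 2^-j - 2^-e]
   and [near_cert a c j l] guarantees [d(α a, x) < 2^-j]. *)
Definition far_cert a c j l e : Prop :=
  (/ 2 ^ j - / 2 ^ e + 2 * / 2 ^ l < dist_approx a c l)%R.
Definition near_cert a c j l : Prop :=
  (dist_approx a c l + 2 * / 2 ^ l < / 2 ^ j)%R.

Lemma far_cert_nat a c j l e : far_cert a c j l e <->
  let X := cpair (cpair a c) l in
  let A := ext 0 X in let G := ext 1 X in let D := S (ext 2 X) in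
  let XX := 2 ^ j * 2 ^ e * 2 ^ l in
  G * XX + D * (2 ^ e * 2 ^ l) + 2 * (D * (2 ^ j * 2 ^ e)) < A * XX + D * (2 ^ j * 2 ^ l).
Proof.
  unfold far_cert, dist_approx. cbv zeta. set (X := cpair (cpair a c) l).
  pose proof (pow2_pos j) as Hj. pose proof (pow2_pos e) as He. pose proof (pow2_pos l) as Hl.
  assert (HD : (0 < INR (S (ext 2 X)))%R) by (apply lt_0_INR; lia).
  rewrite (lt_iff_scaled _ _
    (INR (ext 0 X) * (2^j*2^e*2^l) + INR (S (ext 2 X)) * (2^j*2^l))
    (INR (ext 1 X) * (2^j*2^e*2^l) + INR (S (ext 2 X)) * (2^e*2^l)
       + 2 * (INR (S (ext 2 X)) * (2^j*2^e)))
    (INR (S (ext 2 X)) * (2^j*2^e*2^l))).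
  - split; intros Hlt.
    + apply INR_lt. rewrite !plus_INR, !mult_INR, !INR_pow2. simpl (INR 2). lra.
    + apply lt_INR in Hlt. rewrite !plus_INR, !mult_INR, !INR_pow2 in Hlt. simpl (INR 2) in Hlt. lra.
  - repeat apply Rmult_lt_0_compat; auto.
  - field. repeat split; lra.
Qed.

Lemma near_cert_nat a c j l : near_cert a c j l <->
  let X := cpair (cpair a c) l in
  let A := ext 0 X in let G := ext 1 X in let D := S (ext 2 X) in
  A * (2 ^ j * 2 ^ l) + 2 * (D * 2 ^ j) < G * (2 ^ j * 2 ^ l) + D * 2 ^ l.
Proof.
  unfold near_cert, dist_approx. cbv zeta. set (X := cpair (cpair a c) l).
  pose proof (pow2_pos j) as Hj. pose proof (pow2_pos l) as Hl.
  assert (HD : (0 < INR (S (ext 2 X)))%R) by (apply lt_0_INR; lia).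
  rewrite (lt_iff_scaled _ _
    (INR (ext 1 X) * (2^j*2^l) + INR (S (ext 2 X)) * 2^l)
    (INR (ext 0 X) * (2^j*2^l) + 2 * (INR (S (ext 2 X)) * 2^j))
    (INR (S (ext 2 X)) * (2^j*2^l))).
  - split; intros Hlt.
    + apply INR_lt. rewrite !plus_INR, !mult_INR, !INR_pow2. simpl (INR 2). lra.
    + apply lt_INR in Hlt. rewrite !plus_INR, !mult_INR, !INR_pow2 in Hlt. simpl (INR 2) in Hlt. lra.
  - repeat apply Rmult_lt_0_compat; auto.
  - field. repeat split; lra.
Qed.

Definition e_far_cert (a c j l e : expr) : expr :=
  let X := e_pair (e_pair a c) l in
  let A := EExt 0 X in let G := EExt 1 X in let D := ESucc (EExt 2 X) in
  let XX := e_mul (e_mul (e_pow2 j) (e_pow2 e)) (e_pow2 l) in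
  e_lt (e_add (e_add (e_mul G XX) (e_mul D (e_mul (e_pow2 e) (e_pow2 l))))
              (e_mul (ECst 2) (e_mul D (e_mul (e_pow2 j) (e_pow2 e)))))
       (e_add (e_mul A XX) (e_mul D (e_mul (e_pow2 j) (e_pow2 l)))).

Definition e_near_cert (a c j l : expr) : expr :=
  let X := e_pair (e_pair a c) l in
  let A := EExt 0 X in let G := EExt 1 X in let D := ESucc (EExt 2 X) in
  e_lt (e_add (e_mul A (e_mul (e_pow2 j) (e_pow2 l))) (e_mul (ECst 2) (e_mul D (e_pow2 j))))
       (e_add (e_mul G (e_mul (e_pow2 j) (e_pow2 l))) (e_mul D (e_pow2 l))).

Lemma eval_far_cert a c j l e env : ⟦e_far_cert a c j l e⟧ env <> 0 <->
  far_cert (⟦a⟧ env) (⟦c⟧ env) (⟦j⟧ env) (⟦l⟧ env) (⟦e⟧ env).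
Proof.
  rewrite far_cert_nat. unfold e_far_cert. cbv zeta. rewrite eval_lt.
  repeat progress (rewrite ?eval_add, ?eval_mul, ?eval_pow2, ?eval_pair; cbn [eval_expr]).
  reflexivity.
Qed.

Lemma eval_near_cert a c j l env : ⟦e_near_cert a c j l⟧ env <> 0 <->
  near_cert (⟦a⟧ env) (⟦c⟧ env) (⟦j⟧ env) (⟦l⟧ env).
Proof.
  rewrite near_cert_nat. unfold e_near_cert. cbv zeta. rewrite eval_lt.
  repeat progress (rewrite ?eval_add, ?eval_mul, ?eval_pow2, ?eval_pair; cbn [eval_expr]).
  reflexivity.
Qed.

End Certificates.

Definition is_prefix (w w' : list nat) : Prop :=
  length w <= length w' /\ forall j, j < length w -> nth j w' 0 = nth j w 0.

Definition query k i (w : list nat) m := cpair (cpair k i) (code_list (firstn m w)).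

Definition index k i0 (w : list nat) e := cpair k (cpair i0 (cpair (code_list w) e)).

Lemma index_inj k i0 w e k' i0' w' e' :
  index k i0 w e = index k' i0' w' e' -> k = k' /\ i0 = i0' /\ w = w' /\ e = e'.
Proof.
  unfold index. intros H.
  apply cpair_inj in H as [-> H]. apply cpair_inj in H as [-> H]. apply cpair_inj in H as [H ->].
  apply code_list_inj in H as ->. auto.
Qed.

Lemma index_surj n : exists k i0 w e, n = index k i0 w e.
Proof.
  destruct (cpair_surj n) as (k & r & ->). destruct (cpair_surj r) as (i0 & r' & ->).
  destruct (cpair_surj r') as (c & e & ->). destruct (code_list_surj c) as (w & ->).
  now exists k, i0, w, e.
Qed.

Lemma and_iff_compat_dep (P1 P2 Q1 Q2 : Prop) :
  (P1 <-> Q1) -> (Q1 -> (P2 <-> Q2)) -> (P1 /\ P2 <-> Q1 /\ Q2).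
Proof. tauto. Qed.

Lemma forall_iff {A : Type} (P Q : A -> Prop) :
  (forall x, P x <-> Q x) -> ((forall x, P x) <-> (forall x, Q x)).
Proof. intros H. split; intros H' x; apply H, H'. Qed.

Section Tests.
Variable ext : nat -> nat -> nat.
Local Notation "⟦ e ⟧" := (eval_expr ext e).
Local Notation up := (shift 0 1).

Definition ext_cert k i0 w T (v : list nat) (F : nat -> nat) w' i m : Prop :=
  is_prefix w w' /\ i0 <= i /\ m <= length w' /\
  (forall m', m' <= m -> query k i w' m' < T) /\
  (forall m', m' < m -> F (query k i w' m') = 0) /\ F (query k i w' m) = 1 /\
  (forall j, j < length w' -> exists l, l < T /\ near_cert ext (nth j w' 0) (nth l v 0) j l).

(* [s < T] witnesses that the point whose Cauchy name starts with [v] belongs to the open set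
   with index [index k i0 w e]: either [s = ⟨0, ⟨j, l⟩⟩] certifies that it is far from the
   centre [α (w_j)], or [s = ⟨tag, ⟨⌜w'⌝, ⟨i, m⟩⟩⟩] exhibits a longer approximation [w'] on
   which the realizer [F] writes [0] at position [⟨k, i⟩] after reading [m] symbols. *)
Definition witness k i0 w e T v F s : Prop :=
  (exists j l, s = cpair 0 (cpair j l) /\ j < length w /\ l < T /\
     far_cert ext (nth j w 0) (nth l v 0) j l e) \/
  (exists tag w' i m, tag <> 0 /\ s = cpair tag (cpair (code_list w') (cpair i m)) /\
     ext_cert k i0 w T v F w' i m).

Definition test_sem k i0 w e T v F := exists s, s < T /\ witness k i0 w e T v F s.

Definition e_idx_k n := e_fst n.
Definition e_idx_i0 n := e_fst (e_snd n).
Definition e_idx_w n := e_fst (e_snd (e_snd n)).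
Definition e_idx_e n := e_snd (e_snd (e_snd n)).

Lemma eval_index_fields n env k i0 w e : ⟦n⟧ env = index k i0 w e ->
  ⟦e_idx_k n⟧ env = k /\ ⟦e_idx_i0 n⟧ env = i0 /\
  ⟦e_idx_w n⟧ env = code_list w /\ ⟦e_idx_e n⟧ env = e.
Proof.
  unfold index, e_idx_k, e_idx_i0, e_idx_w, e_idx_e. intros H.
  assert (H2 : ⟦e_snd n⟧ env = cpair i0 (cpair (code_list w) e)) by (apply (eval_snd _ k); auto).
  assert (H3 : ⟦e_snd (e_snd n)⟧ env = cpair (code_list w) e) by (apply (eval_snd _ i0); auto).
  repeat split; [apply (eval_fst _ _ _ _ _ H) | apply (eval_fst _ _ _ _ _ H2)
                | apply (eval_fst _ _ _ _ _ H3) | apply (eval_snd _ _ _ _ _ H3)].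
Qed.

Definition e_query k i m cw := e_pair (e_pair k i) (e_firstn m cw).

Lemma eval_query k i m cw env w : ⟦cw⟧ env = code_list w -> ⟦m⟧ env <= length w ->
  ⟦e_query k i m cw⟧ env = query (⟦k⟧ env) (⟦i⟧ env) w (⟦m⟧ env).
Proof. intros Hw Hm. unfold e_query, query. now rewrite !eval_pair, (eval_firstn _ w). Qed.

Definition e_is_prefix cw cw' :=
  e_and (e_le (e_len cw) (e_len cw'))
        (e_all (e_len cw) (e_eq (e_nth (EVar 0) (up cw')) (e_nth (EVar 0) (up cw)))).

Lemma eval_is_prefix cw cw' env w w' : ⟦cw⟧ env = code_list w -> ⟦cw'⟧ env = code_list w' ->
  ⟦e_is_prefix cw cw'⟧ env <> 0 <-> is_prefix w w'.
Proof.
  intros Hw Hw'. unfold e_is_prefix, is_prefix.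
  rewrite eval_and, eval_le, eval_all, (eval_len _ w), (eval_len _ w') by auto.
  apply and_iff_compat_l. apply forall_iff; intros j. apply imp_iff_compat_l.
  rewrite eval_eq, (eval_nth _ w'), (eval_nth _ w) by (rewrite eval_shift01; auto).
  reflexivity.
Qed.

Definition e_far_test j l n T cv :=
  e_and (e_lt j (e_len (e_idx_w n)))
 (e_and (e_lt l T)
        (e_far_cert (e_nth j (e_idx_w n)) (e_nth l cv) j l (e_idx_e n))).

Lemma eval_far_test j l n T cv env k i0 w e v :
  ⟦n⟧ env = index k i0 w e -> ⟦cv⟧ env = code_list v ->
  ⟦e_far_test j l n T cv⟧ env <> 0 <->
  ⟦j⟧ env < length w /\ ⟦l⟧ env < ⟦T⟧ env /\
  far_cert ext (nth (⟦j⟧ env) w 0) (nth (⟦l⟧ env) v 0) (⟦j⟧ env) (⟦l⟧ env) e.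
Proof.
  intros Hn Hv. destruct (eval_index_fields _ _ _ _ _ _ Hn) as (_ & _ & Hw & He).
  unfold e_far_test. rewrite !eval_and, !eval_lt, (eval_len _ w), eval_far_cert by auto.
  now rewrite (eval_nth _ w), (eval_nth _ v), He.
Qed.

Definition e_ext_test cw' i m n T cv cb :=
  let k := e_idx_k n in
  e_and (e_is_prefix (e_idx_w n) cw')
 (e_and (e_le (e_idx_i0 n) i)
 (e_and (e_le m (e_len cw'))
 (e_and (e_all (ESucc m) (e_lt (e_query (up k) (up i) (EVar 0) (up cw')) (up T)))
 (e_and (e_all m (e_eq (e_nth (e_query (up k) (up i) (EVar 0) (up cw')) (up cb)) (ECst 0)))
 (e_and (e_eq (e_nth (e_query k i m cw') cb) (ECst 1))
        (e_all (e_len cw') (e_ex (up T)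
           (e_near_cert (e_nth (EVar 1) (shift 0 2 cw')) (e_nth (EVar 0) (shift 0 2 cv))
                        (EVar 1) (EVar 0))))))))).

Lemma eval_ext_test cw' i m n T cv cb env k i0 w e v B w' :
  ⟦n⟧ env = index k i0 w e -> ⟦cv⟧ env = code_list v -> ⟦cb⟧ env = code_list B ->
  ⟦cw'⟧ env = code_list w' ->
  ⟦e_ext_test cw' i m n T cv cb⟧ env <> 0 <->
  ext_cert k i0 w (⟦T⟧ env) v (fun x => nth x B 0) w' (⟦i⟧ env) (⟦m⟧ env).
Proof.
  intros Hn Hv Hb Hw'. destruct (eval_index_fields _ _ _ _ _ _ Hn) as (Hk & Hi0 & Hw & _).
  unfold e_ext_test, ext_cert. cbv zeta.
  rewrite eval_and. apply and_iff_compat_dep; [now apply eval_is_prefix|intros _].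
  rewrite eval_and. apply and_iff_compat_dep; [now rewrite eval_le, Hi0|intros _].
  rewrite eval_and. apply and_iff_compat_dep; [now rewrite eval_le, (eval_len _ w')|intros Hm].
  rewrite eval_and. apply and_iff_compat_dep.
  { rewrite eval_all. cbn [eval_expr]. apply forall_iff; intros m'.
    split; intros H Hm'; specialize (H ltac:(lia)); revert H;
      rewrite eval_lt, (eval_query _ _ _ _ _ w'), !eval_shift01, Hk;
      cbn [eval_expr nth]; rewrite ?eval_shift01; auto; lia. }
  intros _.
  rewrite eval_and. apply and_iff_compat_dep.
  { rewrite eval_all. apply forall_iff; intros m'.
    split; intros H Hm'; specialize (H Hm'); revert H;
      rewrite eval_eq, (eval_nth _ B), (eval_query _ _ _ _ _ w'), !eval_shift01, Hk;
      cbn [eval_expr nth]; rewrite ?eval_shift01; auto; lia. }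
  intros _.
  rewrite eval_and. apply and_iff_compat_dep.
  { rewrite eval_eq, (eval_nth _ B), (eval_query _ _ _ _ _ w'), Hk; auto. reflexivity. }
  intros _.
  rewrite eval_all, (eval_len _ w') by auto. apply forall_iff; intros j. apply imp_iff_compat_l.
  rewrite eval_ex, eval_shift01.
  split; intros (l & Hl & H); exists l; split; auto; revert H;
    rewrite eval_near_cert, (eval_nth _ w'), (eval_nth _ v) by (rewrite eval_shift02; auto);
    cbn [eval_expr nth]; auto.
Qed.

Definition e_witness s n T cv cb :=
  e_ifz (e_fst s)
    (e_far_test (e_fst (e_snd s)) (e_snd (e_snd s)) n T cv)
    (e_ext_test (e_fst (e_snd s)) (e_fst (e_snd (e_snd s))) (e_snd (e_snd (e_snd s))) n T cv cb).

Lemma eval_witness s n T cv cb env k i0 w e v B :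
  ⟦n⟧ env = index k i0 w e -> ⟦cv⟧ env = code_list v -> ⟦cb⟧ env = code_list B ->
  ⟦e_witness s n T cv cb⟧ env <> 0 <-> witness k i0 w e (⟦T⟧ env) v (fun x => nth x B 0) (⟦s⟧ env).
Proof.
  intros Hn Hv Hb. unfold e_witness, witness. rewrite eval_ifz.
  destruct (cpair_surj (⟦s⟧ env)) as (tag & rest & Hs). rewrite (eval_fst ext tag rest) by auto.
  assert (Hr : ⟦e_snd s⟧ env = rest) by (apply (eval_snd ext tag); auto).
  destruct tag as [|tag].
  - destruct (cpair_surj rest) as (j & l & ->).
    rewrite eval_far_test by eauto. rewrite (eval_fst ext j l), (eval_snd ext j l) by auto. split.
    + intros H. left. exists j, l. rewrite Hs. auto.
    + intros [(j' & l' & Heq & H)|(tag & w' & i & m & Htag & Heq & _)]; rewrite Hs in Heq.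
      * apply cpair_inj in Heq as [_ Heq]. now apply cpair_inj in Heq as [-> ->].
      * now apply cpair_inj in Heq as [<- _].
  - destruct (cpair_surj rest) as (c & r & ->). destruct (cpair_surj r) as (i & m & ->).
    destruct (code_list_surj c) as (w' & ->).
    assert (Hr' : ⟦e_snd (e_snd s)⟧ env = cpair i m) by (apply (eval_snd ext (code_list w')); auto).
    rewrite (eval_ext_test _ _ _ _ _ _ _ _ k i0 w e v B w') by (auto; apply (eval_fst ext _ (cpair i m)); auto).
    rewrite (eval_fst ext i m), (eval_snd ext i m) by auto. split.
    + intros H. right. exists (S tag), w', i, m. rewrite Hs. auto.
    + intros [(j & l & Heq & _)|(tag' & w'' & i' & m' & Htag & Heq & H)]; rewrite Hs in Heq.
      * now apply cpair_inj in Heq as [? _].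
      * apply cpair_inj in Heq as [_ Heq]. apply cpair_inj in Heq as [Heq Heq'].
        apply code_list_inj in Heq as <-. now apply cpair_inj in Heq' as [<- <-].
Qed.

Definition e_test n T cv cb := e_ex T (e_witness (EVar 0) (up n) (up T) (up cv) (up cb)).

Lemma eval_test n T cv cb env k i0 w e v B :
  ⟦n⟧ env = index k i0 w e -> ⟦cv⟧ env = code_list v -> ⟦cb⟧ env = code_list B ->
  ⟦e_test n T cv cb⟧ env <> 0 <-> test_sem k i0 w e (⟦T⟧ env) v (fun x => nth x B 0).
Proof.
  intros Hn Hv Hb. unfold e_test, test_sem. rewrite eval_ex.
  split; intros (s & Hs & H); exists s; split; auto; revert H;
    rewrite (eval_witness _ _ _ _ _ _ k i0 w e v B), eval_shift01 by (rewrite eval_shift01; auto);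
    auto.
Qed.

#[global] Opaque e_test.

(* The realizer reads the query [⟨t, ⌜B⌝⟩], [B] a prefix of the name of [U], where the
   output position [t = ⟨⟨T, ⌜V⌝⟩, ⌜N⌝⟩] is itself a query of the produced name of
   [n ↦ U_n]: [N] is a prefix of the name [0^n 1 0^ω] of [n], and [⟨T, ⌜V⌝⟩] a query of the
   name of [U_n], [V] being a prefix of a Cauchy name of a point. *)
Definition e_pos := e_fst (EVar 0).
Definition e_prefix_U := e_snd (EVar 0).
Definition e_prefix_n := e_snd e_pos.
Definition e_stage := e_fst (e_fst e_pos).
Definition e_prefix_x := e_snd (e_fst e_pos).

Definition e_has_one := e_sum (e_len e_prefix_n) (e_nth (EVar 0) (up e_prefix_n)).
Definition e_decoded_n := e_sum (e_len e_prefix_n) (e_mul (EVar 0) (e_nth (EVar 0) (up e_prefix_n))).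

Definition e_level3 :=
  e_guard (e_le e_stage (e_len e_prefix_x)) (e_test e_decoded_n e_stage e_prefix_x e_prefix_U).
Definition e_level2 := e_guard e_has_one e_level3.
Definition program := e_guard (e_le e_pos (e_len e_prefix_U)) e_level2.

Lemma eval_program t B : ⟦program⟧ [cpair t (code_list B)] =
  if t <=? length B then S (⟦e_level2⟧ [cpair t (code_list B)]) else 0.
Proof.
  unfold program. rewrite eval_guard_le.
  assert (Ht : ⟦e_pos⟧ [cpair t (code_list B)] = t) by (apply (eval_fst ext _ (code_list B)); reflexivity).
  assert (HB : ⟦e_prefix_U⟧ [cpair t (code_list B)] = code_list B) by (apply (eval_snd ext t); reflexivity).
  now rewrite Ht, (eval_len _ B).
Qed.

Lemma eval_level2 t1 N B : let q := cpair (cpair t1 (code_list N)) (code_list B) in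
  ⟦e_level2⟧ [q] = if sum_below (length N) (fun j => nth j N 0) =? 0 then 0 else S (⟦e_level3⟧ [q]).
Proof.
  intros q. unfold e_level2. rewrite eval_guard. unfold e_has_one.
  assert (HN : ⟦e_prefix_n⟧ [q] = code_list N).
  { apply (eval_snd ext t1). apply (eval_fst ext _ (code_list B)). reflexivity. }
  rewrite eval_sum, (eval_len _ N) by auto.
  rewrite (sum_below_ext _ _ (fun j => nth j N 0)); [reflexivity|].
  intros j _. now rewrite (eval_nth _ N) by (rewrite eval_shift01; auto).
Qed.

Lemma eval_level3 T V N B : let q := cpair (cpair (cpair T (code_list V)) (code_list N)) (code_list B) in
  ⟦e_level3⟧ [q] = if T <=? length V
                   then S (⟦e_test e_decoded_n e_stage e_prefix_x e_prefix_U⟧ [q]) else 0.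
Proof.
  intros q. unfold e_level3. rewrite eval_guard_le.
  assert (HTV : ⟦e_fst e_pos⟧ [q] = cpair T (code_list V)).
  { apply (eval_fst ext _ (code_list N)). apply (eval_fst ext _ (code_list B)). reflexivity. }
  assert (HT : ⟦e_stage⟧ [q] = T) by (apply (eval_fst ext _ (code_list V)); auto).
  assert (HV : ⟦e_prefix_x⟧ [q] = code_list V) by (apply (eval_snd ext T); auto).
  now rewrite HT, (eval_len _ V).
Qed.

Lemma eval_level3_test T V N B k i0 w e :
  let q := cpair (cpair (cpair T (code_list V)) (code_list N)) (code_list B) in
  sum_below (length N) (fun j => j * nth j N 0) = index k i0 w e ->
  ⟦e_test e_decoded_n e_stage e_prefix_x e_prefix_U⟧ [q] <> 0 <->
  test_sem k i0 w e T V (fun x => nth x B 0).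
Proof.
  intros q Hn.
  assert (Hpos : ⟦e_pos⟧ [q] = cpair (cpair T (code_list V)) (code_list N))
    by (apply (eval_fst ext _ (code_list B)); reflexivity).
  assert (HTV : ⟦e_fst e_pos⟧ [q] = cpair T (code_list V)) by (apply (eval_fst ext _ (code_list N)); auto).
  assert (HT : ⟦e_stage⟧ [q] = T) by (apply (eval_fst ext _ (code_list V)); auto).
  assert (HV : ⟦e_prefix_x⟧ [q] = code_list V) by (apply (eval_snd ext T); auto).
  assert (HB : ⟦e_prefix_U⟧ [q] = code_list B) by (apply (eval_snd ext (cpair (cpair T (code_list V)) (code_list N))); reflexivity).
  assert (HN : ⟦e_prefix_n⟧ [q] = code_list N) by (apply (eval_snd ext (cpair T (code_list V))); auto).
  rewrite <- HT. apply (eval_test _ _ _ _ _ k i0 w e V B); auto.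
  unfold e_decoded_n. rewrite eval_sum, (eval_len _ N), <- Hn by auto. apply sum_below_ext.
  intros j _. rewrite eval_mul, (eval_nth _ N) by (rewrite eval_shift01; auto). reflexivity.
Qed.

End Tests.

Lemma small_pow g : (0 < g)%R -> exists l, (/ 2 ^ l < g)%R.
Proof.
  intros Hg. destruct (pow_lt_1_zero (/ 2)) with (y := g) as [N HN]; auto.
  { rewrite Rabs_pos_eq; lra. }
  exists N. specialize (HN N (le_n N)). rewrite pow_inv, Rabs_pos_eq in HN; auto.
  apply Rlt_le, Rinv_0_lt_compat, pow2_pos.
Qed.

(** * The decomposition of [U] *)

Lemma pow_inv_le a b : a <= b -> (/ 2 ^ b <= / 2 ^ a)%R.
Proof. intros H. apply Rinv_le_contravar; [apply pow2_pos | apply Rle_pow; auto; lra]. Qed.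

Lemma bounded_choice (Q : nat -> nat -> Prop) n :
  (forall i, i < n -> exists l, Q i l) -> exists K, forall i, i < n -> exists l, l < K /\ Q i l.
Proof.
  induction n as [|n IH]; intros H; [exists 0; intros; lia|].
  destruct IH as [K HK]; [intros; apply H; lia|]. destruct (H n) as [l Hl]; [lia|].
  exists (S (K + l)). intros i Hi. destruct (Nat.eq_dec i n) as [->|].
  - exists l. split; auto; lia.
  - destruct (HK i) as (l' & ? & ?); [lia|]. exists l'. split; auto; lia.
Qed.

Lemma nth_pref (p : baire) m i : i < m -> nth i (pref p m) 0 = p i.
Proof.
  intros H. unfold pref. rewrite (nth_indep _ 0 (p 0)) by (now rewrite length_map, length_seq).
  now rewrite map_nth, seq_nth.
Qed.

Lemma length_pref (p : baire) m : length (pref p m) = m.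
Proof. unfold pref. now rewrite length_map, length_seq. Qed.

Lemma firstn_pref (p : baire) m L : m <= L -> firstn m (pref p L) = pref p m.
Proof.
  intros H. apply nth_ext with 0 0; rewrite length_firstn, !length_pref; [lia|].
  intros i Hi. rewrite nth_firstn. destruct (Nat.ltb_spec i m); [|lia].
  rewrite !nth_pref by lia. reflexivity.
Qed.

Lemma is_prefix_trans w1 w2 w3 : is_prefix w1 w2 -> is_prefix w2 w3 -> is_prefix w1 w3.
Proof.
  intros [H1 H2] [H3 H4]. split; [lia|]. intros j Hj. rewrite H4, H2; auto. lia.
Qed.

Lemma prefix_chain_limit (W : nat -> list nat) :
  (forall n, is_prefix (W n) (W (S n))) -> (forall n, n <= length (W n)) ->
  forall n m, m <= length (W n) -> pref (fun j => nth j (W (S j)) 0) m = firstn m (W n).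
Proof.
  intros Hstep Hlen.
  assert (Hmono : forall n n', n <= n' -> is_prefix (W n) (W n')).
  { intros n n' H. induction H; [split; auto|]. eapply is_prefix_trans; eauto. }
  intros n m Hm. apply nth_ext with 0 0; rewrite length_pref, ?length_firstn; [lia|].
  intros j Hj. rewrite nth_pref, nth_firstn by auto. destruct (Nat.ltb_spec j m); [|lia].
  pose proof (Hlen (S j)).
  destruct (Hmono (S j) (Nat.max n (S j))) as [_ H1]; [lia|].
  destruct (Hmono n (Nat.max n (S j))) as [_ H2]; [lia|].
  rewrite <- H1, H2; auto; lia.
Qed.

Lemma runs_output a p q n m : runs a p q ->
  (forall m', m' < m -> a (cpair n (code_list (pref p m'))) = 0) ->
  a (cpair n (code_list (pref p m))) <> 0 ->
  q n = pred (a (cpair n (code_list (pref p m)))).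
Proof.
  intros Hrun Hzero Hnz. destruct (Hrun n) as (m2 & Hnz2 & Hzero2 & Hq).
  replace m with m2; auto.
  destruct (Nat.lt_trichotomy m2 m) as [Hlt|[Heq|Hgt]]; auto.
  - now apply Hzero in Hlt.
  - now apply Hzero2 in Hgt.
Qed.

Lemma runs_at (a p q : baire) (len : nat -> nat) :
  (forall n m, m < len n -> a (cpair n (code_list (pref p m))) = 0) ->
  (forall n, a (cpair n (code_list (pref p (len n)))) = S (q n)) -> runs a p q.
Proof. intros Hzero Hout n. exists (len n). rewrite Hout. auto. Qed.

Section Decomposition.
Variable M : cmetric_space.
Local Notation d := (cm_d M).
Local Notation α := (cm_seq M).

Definition approximates (w : list nat) (x : M) : Prop :=
  forall j, j < length w -> (d (α (nth j w 0%nat)) x < / 2 ^ j)%R.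

Definition far_from (w : list nat) e (x : M) : Prop :=
  exists j, j < length w /\ (/ 2 ^ j - / 2 ^ e < d (α (nth j w 0%nat)) x)%R.

(* On [w'] the realizer [b] writes [0] at position [⟨k, i⟩], [i >= i0]: the answer [1]
   means "write [0]". *)
Definition zero_extension (b : baire) k i0 w (x : M) w' : Prop :=
  exists i m, is_prefix w w' /\ i0 <= i /\ m <= length w' /\
    (forall m', m' < m -> b (query k i w' m') = 0) /\ b (query k i w' m) = 1 /\
    approximates w' x.

Definition in_basic b k i0 w e x : Prop := far_from w e x \/ exists w', zero_extension b k i0 w x w'.

Definition U_seq (b : baire) (n : nat) (x : M) : Prop :=
  exists k i0 w e, n = index k i0 w e /\ in_basic b k i0 w e x.

Lemma U_seq_index b k i0 w e x : U_seq b (index k i0 w e) x <-> in_basic b k i0 w e x.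
Proof.
  split.
  - intros (k' & i0' & w' & e' & Heq & H). now apply index_inj in Heq as (-> & -> & -> & ->).
  - intros H. now exists k, i0, w, e.
Qed.

Lemma dense_near (x : M) j : exists i, (d (α i) x < / 2 ^ j)%R.
Proof.
  destruct (cm_dense M x (/ 2 ^ j)) as [i Hi]; [apply Rinv_0_lt_compat, pow2_pos|].
  exists i. now rewrite cm_d_sym.
Qed.

Definition nearby (x : M) (j : nat) : nat :=
  proj1_sig (constructive_indefinite_description _ (dense_near x j)).

Lemma nearby_spec x j : (d (α (nearby x j)) x < / 2 ^ j)%R.
Proof. unfold nearby. now destruct (constructive_indefinite_description _ _). Qed.

Lemma approximates_app_nearby w x : approximates w x -> approximates (w ++ [nearby x (length w)]) x.
Proof.
  intros Hw j Hj. rewrite length_app in Hj. simpl in Hj.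
  destruct (Nat.ltb_spec j (length w)).
  - rewrite app_nth1 by auto. now apply Hw.
  - replace j with (length w) by lia. rewrite app_nth2, Nat.sub_diag by lia. apply nearby_spec.
Qed.

Lemma extend_to_name w x : approximates w x ->
  exists p : baire, (forall j, d (α (p j)) x < / 2 ^ j)%R /\ forall j, j < length w -> p j = nth j w 0.
Proof.
  intros Hw. exists (fun j => if j <? length w then nth j w 0 else nearby x j). split.
  - intros j. destruct (Nat.ltb_spec j (length w)); [apply Hw; auto | apply nearby_spec].
  - intros j Hj. now destruct (Nat.ltb_spec j (length w)); [|lia].
Qed.

Lemma approximates_margin w x : approximates w x ->
  exists e, forall j, j < length w -> (d (α (nth j w 0%nat)) x <= / 2 ^ j - / 2 ^ e)%R.
Proof.
  intros Hw.
  destruct (bounded_choice (fun j e => / 2 ^ e < / 2 ^ j - d (α (nth j w 0%nat)) x)%R (length w)) as [K HK].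
  { intros j Hj. apply small_pow. specialize (Hw j Hj). lra. }
  exists K. intros j Hj. destruct (HK j Hj) as (e & He & H).
  pose proof (pow_inv_le e K ltac:(lia)). lra.
Qed.

Lemma zero_extension_app b k i0 w x w' a :
  zero_extension b k i0 w x w' -> approximates (w' ++ [a]) x -> zero_extension b k i0 w x (w' ++ [a]).
Proof.
  intros (i & m & [Hlen Hnth] & Hi & Hm & Hzero & Hone & _) Happ.
  assert (Hq : forall m', m' <= m -> query k i (w' ++ [a]) m' = query k i w' m').
  { intros m' Hm'. unfold query. rewrite firstn_app.
    replace (m' - length w') with 0 by lia. now rewrite app_nil_r. }
  exists i, m. unfold is_prefix. rewrite length_app. simpl. repeat split; auto; try lia.
  - intros j Hj. rewrite app_nth1 by lia. auto.
  - intros m' Hm'. rewrite Hq by lia. auto.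
  - rewrite Hq; auto.
Qed.

Section Realizer.
Variables (b : baire) (U : M -> Prop).
Hypothesis b_realizes : realizes (cauchy M) rep_S' b U.

Lemma not_U_seq_U x n : ~ U_seq b n x -> U x.
Proof.
  destruct (index_surj n) as (k & i0 & w & e & ->). rewrite U_seq_index.
  intros Hout. unfold in_basic, far_from in Hout.
  assert (Hw : approximates w x).
  { intros j Hj. apply Rnot_le_lt. intros C. apply Hout. left. exists j. split; auto.
    pose proof (Rinv_0_lt_compat _ (pow2_pos e)). lra. }
  destruct (extend_to_name w x Hw) as (p & Hp & Hpw).
  destruct (b_realizes p x) as (q & Hq & r & Hr & HU); [intros i; apply Rlt_le, Hp|].
  apply HU. exists k. intros Hrk. destruct (Hr k) as [i1 Hi1].
  set (i := Nat.max i0 i1).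
  destruct (Hq (cpair k i)) as (m & Hnz & Hzero & Hqm).
  rewrite Hi1, Hrk in Hqm by lia.
  apply Hout. right. exists (pref p (Nat.max m (length w))), i, m.
  unfold is_prefix, query. rewrite length_pref, !firstn_pref by lia. repeat split; try lia.
  - intros j Hj. rewrite nth_pref by lia. auto.
  - intros m' Hm'. rewrite firstn_pref by lia. auto.
  - intros j Hj. rewrite length_pref in Hj. rewrite nth_pref by lia. apply Hp.
Qed.

Lemma extension_step x w k i0 : (forall n, U_seq b n x) -> approximates w x ->
  exists w', zero_extension b k i0 w x w' /\ length w < length w'.
Proof.
  intros HU Hw. destruct (approximates_margin w x Hw) as [e He].
  destruct (proj1 (U_seq_index b k i0 w e x) (HU _)) as [(j & Hj & H)|(w' & Hw')].
  - specialize (He j Hj). lra.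
  - exists (w' ++ [nearby x (length w')]). split.
    + apply zero_extension_app; auto. apply approximates_app_nearby.
      now destruct Hw' as (? & ? & ? & ? & ? & ? & ? & ?).
    + destruct Hw' as (? & ? & [? _] & _). rewrite length_app. simpl. lia.
Qed.

Lemma diagonal_chain x : (forall n, U_seq b n x) ->
  exists W : nat -> list nat,
    (forall n, approximates (W n) x /\ n <= length (W n)) /\
    (forall n, zero_extension b (fst (of_nat n)) (snd (of_nat n)) (W n) x (W (S n))).
Proof.
  intros HU.
  destruct (functional_choice (fun (wn : list nat * nat) w' =>
      approximates (fst wn) x ->
      zero_extension b (fst (of_nat (snd wn))) (snd (of_nat (snd wn))) (fst wn) x w' /\
      length (fst wn) < length w')) as [F HF].
  { intros [w n]. destruct (classic (approximates w x)) as [Hw|Hw].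
    - destruct (extension_step x w (fst (of_nat n)) (snd (of_nat n)) HU Hw) as [w' Hw'].
      now exists w'.
    - now exists w. }
  set (W := fix W (n : nat) : list nat := match n with 0 => [] | S n => F (W n, n) end).
  assert (HW : forall n, approximates (W n) x /\ n <= length (W n)).
  { induction n as [|n [IH1 IH2]]; [split; [intros j Hj; simpl in Hj; lia | simpl; lia]|].
    destruct (HF (W n, n) IH1) as [(i & m & _ & _ & _ & _ & _ & Happ) Hlen].
    change (W (S n)) with (F (W n, n)). cbn [fst] in Hlen. split; [exact Happ | lia]. }
  exists W. split; auto. intros n. exact (proj1 (HF (W n, n) (proj1 (HW n)))).
Qed.

(* Otherwise the chain above, which visits every pair [⟨k, i0⟩], converges to a Cauchy name
   of [x] on which [b] writes [0] at positions [⟨k, i⟩] for arbitrarily large [i]; for the [k]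
   witnessing [U x] this contradicts that these outputs converge to a nonzero value. *)
Lemma U_not_U_seq x : U x -> exists n, ~ U_seq b n x.
Proof.
  intros Hx. apply NNPP. intros Hn.
  destruct (diagonal_chain x) as (W & HW & HZ); [intros n; apply NNPP; eauto|].
  set (p := fun j => nth j (W (S j)) 0).
  assert (Hpref : forall n m, m <= length (W n) -> pref p m = firstn m (W n)).
  { apply prefix_chain_limit; intros n; [destruct (HZ n) as (i & m & ? & _); auto | apply HW]. }
  destruct (b_realizes p x) as (q & Hq & r & Hr & HUx).
  { intros j. apply Rlt_le. destruct (HW (S j)) as [Happ Hlen]. apply Happ. lia. }
  apply HUx in Hx as [k Hk]. destruct (Hr k) as [i1 Hi1].
  destruct (HZ (cpair k i1)) as (i & m & _ & Hi & Hm & Hzero & Hone & _).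
  rewrite unpair_cpair in Hi, Hzero, Hone. cbn [fst snd] in Hi, Hzero, Hone.
  assert (Hquery : forall m', m' <= m ->
            query k i (W (S (cpair k i1))) m' = cpair (cpair k i) (code_list (pref p m'))).
  { intros m' Hm'. unfold query. rewrite (Hpref (S (cpair k i1))) by lia. reflexivity. }
  apply Hk. rewrite <- (Hi1 i) by lia.
  rewrite (runs_output _ _ _ _ m Hq); rewrite <- ?Hquery; auto.
  - now rewrite Hone.
  - intros m' Hm'. rewrite <- Hquery by lia. auto.
  - rewrite Hone. discriminate.
Qed.

Lemma U_iff_not_U_seq x : U x <-> exists n, ~ U_seq b n x.
Proof. split; [apply U_not_U_seq | intros [n Hn]; exact (not_U_seq_U x n Hn)]. Qed.

End Realizer.
End Decomposition.

Lemma Rabs_le_bounds u v r : (Rabs (u - v) <= r)%R -> (v - r <= u <= v + r)%R.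
Proof. unfold Rabs. destruct (Rcase_abs (u - v)); lra. Qed.

Lemma test_sem_agree ext k i0 w e T v F G : (forall i, i < T -> F i = G i) ->
  test_sem ext k i0 w e T v F -> test_sem ext k i0 w e T v G.
Proof.
  intros HFG (s & Hs & [H|(tag & w' & i & m & Htag & Heq & C1 & C2 & C3 & C4 & C5 & C6 & C7)]).
  - exists s. split; [|left]; auto.
  - exists s. split; auto. right. exists tag, w', i, m. do 3 (split; auto).
    repeat split; auto.
    + intros m' Hm'. rewrite <- HFG by (apply C4; lia). auto.
    + rewrite <- HFG by (apply C4; lia). auto.
Qed.

Section CertifiedTests.
Variables (M : cmetric_space) (ext : nat -> nat -> nat).
Local Notation d := (cm_d M).
Local Notation α := (cm_seq M).
Hypothesis ext_approx : forall i j k, (Rabs (dist_approx ext i j k - d (α i) (α j)) <= / 2 ^ k)%R.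

Lemma far_cert_sound (x : M) a c j l e : (d (α c) x <= / 2 ^ l)%R ->
  far_cert ext a c j l e -> (/ 2 ^ j - / 2 ^ e < d (α a) x)%R.
Proof.
  unfold far_cert. intros Hc H. pose proof (Rabs_le_bounds _ _ _ (ext_approx a c l)).
  pose proof (cm_d_tri M (α a) x (α c)). rewrite (cm_d_sym M x (α c)) in *. lra.
Qed.

Lemma near_cert_sound (x : M) a c j l : (d (α c) x <= / 2 ^ l)%R ->
  near_cert ext a c j l -> (d (α a) x < / 2 ^ j)%R.
Proof.
  unfold near_cert. intros Hc H. pose proof (Rabs_le_bounds _ _ _ (ext_approx a c l)).
  pose proof (cm_d_tri M (α a) (α c) x). lra.
Qed.

Lemma far_cert_complete (x : M) (y : baire) a j e : delta (cauchy M) y x ->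
  (/ 2 ^ j - / 2 ^ e < d (α a) x)%R -> exists l, far_cert ext a (y l) j l e.
Proof.
  intros Hy H. destruct (small_pow ((d (α a) x - (/ 2 ^ j - / 2 ^ e)) / 4)) as [l Hl]; [lra|].
  exists l. unfold far_cert. pose proof (Rabs_le_bounds _ _ _ (ext_approx a (y l) l)).
  pose proof (cm_d_tri M (α a) (α (y l)) x). pose proof (Hy l). simpl in *. lra.
Qed.

Lemma near_cert_complete (x : M) (y : baire) a j : delta (cauchy M) y x ->
  (d (α a) x < / 2 ^ j)%R -> exists l, near_cert ext a (y l) j l.
Proof.
  intros Hy H. destruct (small_pow ((/ 2 ^ j - d (α a) x) / 4)) as [l Hl]; [lra|].
  exists l. unfold near_cert. pose proof (Rabs_le_bounds _ _ _ (ext_approx a (y l) l)).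
  pose proof (cm_d_tri M (α a) x (α (y l))). rewrite (cm_d_sym M x (α (y l))) in *.
  pose proof (Hy l). simpl in *. lra.
Qed.

Lemma in_basic_iff_test b k i0 w e (x : M) (y : baire) : delta (cauchy M) y x ->
  in_basic M b k i0 w e x <-> exists T, test_sem ext k i0 w e T (pref y T) b.
Proof.
  intros Hy. split.
  - intros [(j & Hj & H)|(w' & i & m & Hpre & Hi & Hm & Hzero & Hone & Happ)].
    + destruct (far_cert_complete x y _ _ _ Hy H) as [l Hl].
      set (s := cpair 0 (cpair j l)). exists (S (s + l)), s. split; [lia|].
      left. exists j, l. rewrite nth_pref by lia. repeat split; auto; lia.
    + destruct (bounded_choice (fun j l => near_cert ext (nth j w' 0) (y l) j l) (length w'))
        as [K HK]; [intros j Hj; apply (near_cert_complete x y); auto|].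
      destruct (bounded_choice (fun m' q => q = query k i w' m') (S m)) as [K' HK']; [eauto|].
      set (s := cpair 1 (cpair (code_list w') (cpair i m))).
      exists (S (s + K + K')), s. split; [lia|]. right. exists 1, w', i, m.
      do 3 (split; auto). repeat split; auto.
      * intros m' Hm'. destruct (HK' m') as (q & Hq & ->); lia.
      * intros j Hj. destruct (HK j Hj) as (l & Hl & H). exists l. rewrite nth_pref by lia.
        split; auto; lia.
  - intros (T & s & Hs & [(j & l & _ & Hj & Hl & H)|(tag & w' & i & m & _ & _ & C1 & C2 & C3 & _ & C5 & C6 & C7)]).
    + left. exists j. rewrite nth_pref in H by lia. split; auto.
      apply (far_cert_sound x _ (y l) j l); auto.
    + right. exists w', i, m. split; [exact C1|]. repeat split; auto.
      intros j Hj. destruct (C7 j Hj) as (l & Hl & H). rewrite nth_pref in H by lia.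
      apply (near_cert_sound x _ (y l) j l); auto.
Qed.

End CertifiedTests.

(** * Realization *)

Lemma nat_name_indicator (e : baire) n m : delta rep_nat e n ->
  sum_below (length (pref e m)) (fun j => nth j (pref e m) 0) = if n <? m then 1 else 0.
Proof.
  intros He. simpl in He. rewrite length_pref.
  rewrite (sum_below_ext _ _ e) by (intros; apply nth_pref; auto).
  induction m as [|m IH]; cbn [sum_below]; auto. rewrite IH, He.
  destruct (Nat.ltb_spec n m), (Nat.eqb_spec m n), (Nat.ltb_spec n (S m)); lia.
Qed.

Lemma nat_name_position (e : baire) n : delta rep_nat e n ->
  sum_below (length (pref e (S n))) (fun j => j * nth j (pref e (S n)) 0) = n.
Proof.
  intros He. simpl in He. rewrite length_pref.
  rewrite (sum_below_ext _ _ (fun j => j * e j)) by (intros; rewrite nth_pref; auto).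
  assert (Hbelow : forall m, m <= n -> sum_below m (fun j => j * e j) = 0).
  { induction m as [|m IH]; intros Hm; cbn [sum_below]; auto.
    rewrite IH, He by lia. destruct (Nat.eqb_spec m n); lia. }
  cbn [sum_below]. rewrite Hbelow, He, Nat.eqb_refl by lia. lia.
Qed.

Section Realization.
Variables (M : cmetric_space) (ext : nat -> nat -> nat).
Hypothesis ext_approx :
  forall i j k, (Rabs (dist_approx ext i j k - cm_d M (cm_seq M i) (cm_seq M j)) <= / 2 ^ k)%R.
Local Notation "⟦ e ⟧" := (eval_expr ext e).

Definition name_of_U_seq (b : baire) : baire :=
  fun t => ⟦e_level2⟧ [cpair t (code_list (pref b t))].

Definition name_of_basic (b e : baire) n : baire := fun t1 =>
  let t := cpair t1 (code_list (pref e (S n))) in ⟦e_level3⟧ [cpair t (code_list (pref b t))].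

Definition sierpinski_name (b e : baire) n (y : baire) : baire := fun T =>
  let t := cpair (cpair T (code_list (pref y T))) (code_list (pref e (S n))) in
  ⟦e_test e_decoded_n e_stage e_prefix_x e_prefix_U⟧ [cpair t (code_list (pref b t))].

Lemma program_runs b : runs (fun N => ⟦program⟧ [N]) b (name_of_U_seq b).
Proof.
  apply (runs_at _ _ _ (fun t => t)); intros t; [intros m Hm|];
    rewrite eval_program, length_pref.
  - destruct (Nat.leb_spec t m); [lia|reflexivity].
  - now rewrite Nat.leb_refl.
Qed.

Lemma name_of_U_seq_runs b e n : delta rep_nat e n -> runs (name_of_U_seq b) e (name_of_basic b e n).
Proof.
  intros He. apply (runs_at _ _ _ (fun _ => S n)); intros t1; [intros m Hm|];
    unfold name_of_U_seq; rewrite eval_level2, (nat_name_indicator e n) by auto.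
  - destruct (Nat.ltb_spec n m); [lia|reflexivity].
  - destruct (Nat.ltb_spec n (S n)); [reflexivity|lia].
Qed.

Lemma name_of_basic_runs b e n y : runs (name_of_basic b e n) y (sierpinski_name b e n y).
Proof.
  apply (runs_at _ _ _ (fun T => T)); intros T; [intros m Hm|];
    unfold name_of_basic; rewrite eval_level3, length_pref.
  - destruct (Nat.leb_spec T m); [lia|reflexivity].
  - now rewrite Nat.leb_refl.
Qed.

Lemma sierpinski_name_spec b e n y x : delta rep_nat e n -> delta (cauchy M) y x ->
  delta_S (sierpinski_name b e n y) (U_seq M b n x).
Proof.
  intros He Hy. destruct (index_surj n) as (k & i0 & w & e' & Hn).
  assert (HU : U_seq M b n x <-> in_basic M b k i0 w e' x) by (rewrite Hn; apply U_seq_index).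
  unfold delta_S. rewrite HU, (in_basic_iff_test M ext ext_approx b k i0 w e' x y Hy).
  split; intros (T & H); exists T; unfold sierpinski_name in *; revert H;
    rewrite (eval_level3_test ext _ _ _ _ k i0 w e') by (rewrite nat_name_position; auto).
  all: apply test_sem_agree; intros i Hi; rewrite nth_pref; auto.
  all: pose proof (cpair_ge_l T (code_list (pref y T)));
       pose proof (cpair_ge_l (cpair T (code_list (pref y T))) (code_list (pref e (S n)))); lia.
Qed.

Lemma U_seq_named b : realizes rep_nat (rep_O (cauchy M)) (name_of_U_seq b) (U_seq M b).
Proof.
  intros e n He. exists (name_of_basic b e n). split; [now apply name_of_U_seq_runs|].
  intros y x Hy. exists (sierpinski_name b e n y).
  split; [apply name_of_basic_runs | now apply sierpinski_name_spec].
Qed.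

End Realization.

Theorem proposition25 (M : cmetric_space) :
  computable_mv (rep_O' (cauchy M)) (rep_C rep_nat (rep_O (cauchy M)))
    (fun (U : M -> Prop) (Us : nat -> M -> Prop) =>
       forall x : M, U x <-> exists n : nat, ~ Us n x).
Proof.
  destruct (cm_dist_computable M) as (num & neg & den & [cn Hcn] & [cg Hcg] & [cd Hcd] & Happrox).
  set (ext i := match i with 0 => num | 1 => neg | _ => den end).
  set (code i := match i with 0 => cn | 1 => cg | _ => cd end).
  assert (Hcode : forall i m, eval (code i) [m] (ext i m)) by (intros [|[|]] m; simpl; auto).
  exists (fun N => eval_expr ext program [N]).
  split; [exact (computable_nat_expr ext code program Hcode)|].
  intros b U Hb. exists (name_of_U_seq ext b). split; [apply program_runs|].
  exists (U_seq M b). split; [exact (U_seq_named M ext Happrox b)|].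
  exact (U_iff_not_U_seq M b U Hb).
Qed.
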